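(* Let $n \geq 3$ be an integer and let $\ell$ be an odd positive integer. Then the quotient group $B_n[\ell]/B_n[2\ell]$ is isomorphic to the symmetric group $S_n$. (Here $B_n[2\ell]$ is a normal subgroup of $B_n[\ell]$, being the kernel of the reduction-mod-$2\ell$ Burau map restricted to $B_n[\ell]$.)
   Context: $B_n$ denotes the braid group on $n$ strands with standard Artin generators $\sigma_1,\dots,\sigma_{n-1}$. The reduced integral Burau representation $\rho_{-1}: B_n \to GL(n-1,\mathbb{Z})$ is defined on generators by $\rho_{-1}(\sigma_1)=\begin{pmatrix}1&0\\1&1\end{pmatrix}\oplus \mathrm{Id}_{n-3}$, $\rho_{-1}(\sigma_{n-1})=\mathrm{Id}_{n-3}\oplus\begin{pmatrix}1&-1\\0&1\end{pmatrix}$, and for $1<i<n-1$, $\rho_{-1}(\sigma_i)=\mathrm{Id}_{i-2}\oplus\begin{pmatrix}1&-1&0\\0&1&0\\0&1&1\end{pmatrix}\oplus \mathrm{Id}_{n-i-2}$, where $\oplus$ denotes block-diagonal sum. For a positive integer $\ell$, let $r_\ell: GL(n-1,\mathbb{Z})\to GL(n-1,\mathbb{Z}/\ell\mathbb{Z})$ be entrywise reduction mod $\ell$. The level $\ell$ congruence subgroup of the braid group is $B_n[\ell] := \ker(r_\ell\circ\rho_{-1})$. *)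

From HB Require Import structures.
From mathcomp Require Import all_boot all_order all_algebra all_fingroup.
Set Implicit Arguments. Unset Strict Implicit. Unset Printing Implicit Defensive.
Import Order.TTheory GRing.Theory Num.Theory.
Local Open Scope ring_scope.

(* A letter of a braid word on n strands: (k, b) stands for the Artin
   generator sigma_{k+1} (k : 'I_(n-1), 0-based) if b = true and for its
   inverse sigma_{k+1}^{-1} if b = false.  Words (seq of letters) are the
   elements of the free group on sigma_1..sigma_{n-1}, which surjects onto
   the braid group B_n. *)
Definition braid_letter (n : nat) := ('I_n.-1 * bool)%type.

(* rho_{-1}(sigma_{k+1}) : identity plus entry -1 at (k-1,k) and +1 at (k+1,k)
   (0-based, whenever these positions exist); this is exactly the block
   description of the reduced integral Burau representation. *)
Definition burau_gen (n : nat) (k : 'I_n.-1) : 'M[int]_(n.-1) :=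
  \matrix_(a < n.-1, b < n.-1)
    ((a == b :> nat)%:Z - ((a.+1 == b :> nat) && (b == k :> nat))%:Z
                 + ((a == b.+1 :> nat) && (b == k :> nat))%:Z).

Definition burau_letter (n : nat) (x : braid_letter n) : 'M[int]_(n.-1) :=
  if x.2 then burau_gen x.1 else invmx (burau_gen x.1).

Definition burau (n : nat) (w : seq (braid_letter n)) : 'M[int]_(n.-1) :=
  foldr (fun x A => burau_letter x *m A) 1%:M w.

(* r_l (rho_{-1}(w)) = Id in GL(n-1, Z/lZ), i.e. w represents an element of
   the level-l congruence subgroup B_n[l]. *)
Definition in_congr (n l : nat) (w : seq (braid_letter n)) : Prop :=
  forall i j : 'I_n.-1,
    (burau w i j = ((i == j)%:Z : int) %[mod (l%:Z)])%Z.

From mathcomp Require Import all_boot all_order all_algebra all_fingroup.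
From mathcomp Require Import zify.
Set Implicit Arguments. Unset Strict Implicit. Unset Printing Implicit Defensive.
Import Order.TTheory GRing.Theory Num.Theory.
Local Open Scope ring_scope.

(* Reduced mod 2, rho_(-1)(sigma_i) permutes the n vectors y_j = e_(j-1) + e_j
   (1 <= j <= n, with e_0 = e_n = 0) of (Z/2)^(n-1) exactly as the transposition
   (i i+1) permutes the strands.  For n >= 3 the y_j are distinct and span, so a
   braid acts trivially on the strands iff it lies in B_n[2].  For odd l, B_n[2l]
   is the intersection of B_n[l] and B_n[2] by the Chinese remainder theorem,
   which identifies the kernel on B_n[l]; surjectivity holds because sigma_i^l
   lies in B_n[l] (as rho_(-1)(sigma_i) - 1 squares to 0) and, l being odd, is
   sent to (i i+1). *)

Section AdjacentTranspositions.
Variable m : nat.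

Definition adj_tperm (k : 'I_m) : {perm 'I_m.+1} :=
  tperm (widen_ord (leqnSn m) k) (lift ord0 k).

Lemma adj_tperm_ind (P : {perm 'I_m.+1} -> Prop) :
    P 1%g -> (forall s t, P s -> P t -> P (s * t)%g) ->
    (forall k, P (adj_tperm k)) ->
  forall s, P s.
Proof.
move=> P1 PM Padj.
have Pnext (i j : 'I_m.+1) : j = i.+1 :> nat -> P (tperm i j).
  move=> ji; have lt_i_m : (i < m)%N by rewrite -ltnS -ji.
  have -> : i = widen_ord (leqnSn m) (Ordinal lt_i_m) by apply/val_inj.
  have -> : j = lift ord0 (Ordinal lt_i_m) by apply/val_inj.
  exact: Padj.
have Ptperm d (i j : 'I_m.+1) : j = (i + d.+1)%N :> nat -> P (tperm i j).
  elim: d j => [|d IHd] j ji; first by apply: Pnext; rewrite ji addn1.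
  have lt_k_m : (i + d.+1 < m.+1)%N by have := ltn_ord j; lia.
  set k := Ordinal lt_k_m.
  have <- : (tperm i k ^ tperm k j)%g = tperm i j.
    by rewrite tpermJ tpermL tpermD //; apply/eqP => /(congr1 val) /=; lia.
  have Pkj : P (tperm k j) by apply: Pnext => /=; lia.
  by rewrite /conjg tpermV; exact: PM _ _ Pkj (PM _ _ (IHd k erefl) Pkj).
move=> s; have [ts -> _] := prod_tpermP s.
elim: ts => [|[i j] ts IHts]; first by rewrite big_nil.
rewrite big_cons; apply: (PM) => //=.
case: (ltngtP i j) => [lt_ij|lt_ji|/val_inj ->]; last by rewrite tperm1.
- by apply: (Ptperm (j - i).-1); lia.
- by rewrite tpermC; apply: (Ptperm (i - j).-1); lia.
Qed.

End AdjacentTranspositions.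

Section BurauMatrices.
Variable n : nat.
Implicit Types (k : 'I_n.-1) (u v : seq (braid_letter n)).

Definition burau_nilp k : 'M[int]_n.-1 := \matrix_(a, b)
  (((a == b.+1 :> nat) && (b == k :> nat))%:Z - ((a.+1 == b :> nat) && (b == k :> nat))%:Z).

Lemma burau_genE k : burau_gen k = 1%:M + burau_nilp k.
Proof.
apply/matrixP => a b; rewrite !mxE -val_eqE /=.
by do ![case: eqP => ?] => //=.
Qed.

Lemma burau_nilp_sqr k : burau_nilp k *m burau_nilp k = 0.
Proof.
apply/matrixP => a b; rewrite !mxE; apply: big1 => c _; rewrite !mxE.
by do ![case: eqP => ? /=] => //; lia.
Qed.

Lemma burau_gen_inv k : invmx (burau_gen k) = 1%:M - burau_nilp k.
Proof.
have inv_gen : burau_gen k *m (1%:M - burau_nilp k) = 1%:M.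
  by rewrite burau_genE mulmxDl mul1mx mulmxBr mulmx1 burau_nilp_sqr subr0 addrNK.
have [unit_gen _] := mulmx1_unit inv_gen.
by rewrite -[invmx _]mulmx1 -{1}inv_gen mulmxA mulVmx // mul1mx.
Qed.

Lemma burau_cat u v : burau (u ++ v) = burau u *m burau v.
Proof. by elim: u => [|x u IHu] /=; rewrite ?mul1mx // IHu mulmxA. Qed.

Lemma burau_nseq k p : burau (nseq p (k, true)) = 1%:M + p%:Z *: burau_nilp k.
Proof.
elim: p => [|p IHp] /=; first by rewrite scale0r addr0.
rewrite -/(burau _) IHp /burau_letter /= burau_genE mulmxDl mul1mx mulmxDr mulmx1.
by rewrite -scalemxAr burau_nilp_sqr scaler0 addr0 intS scalerDl scale1r addrAC addrA.
Qed.

Definition mx_eq1_mod (c : int) (A : 'M[int]_n.-1) := exists C, A = 1%:M + c *: C.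

Lemma mx_eq1_modM c A B : mx_eq1_mod c A -> mx_eq1_mod c B -> mx_eq1_mod c (A *m B).
Proof.
move=> [C ->] [D ->]; exists (C + D + c *: (C *m D)).
rewrite mulmxDl mul1mx mulmxDr mulmx1 -scalemxAl -scalemxAr !scalerDr.
by rewrite -!addrA [c *: D + _]addrCA.
Qed.

Lemma in_congrE c u : in_congr c u <-> mx_eq1_mod c%:Z (burau u).
Proof.
split=> [congr_u | [C burau_u] i j].
  exists (\matrix_(i, j) ((burau u i j - (i == j)%:Z) %/ c%:Z)%Z).
  apply/matrixP => i j; rewrite !mxE.
  move/eqP: (congr_u i j); rewrite eqz_mod_dvd => /divzK.
  by rewrite mulrC => ->; rewrite natz addrC subrK.
rewrite burau_u !mxE mulrC; apply/eqP; rewrite eqz_mod_dvd natz addrAC subrr add0r.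
by apply/dvdzP; exists (C i j).
Qed.

Lemma in_congr_cat c u v : in_congr c u -> in_congr c v -> in_congr c (u ++ v).
Proof. by rewrite !in_congrE burau_cat; apply: mx_eq1_modM. Qed.

Lemma in_congr_nseq c k : in_congr c (nseq c (k, true)).
Proof. by apply/in_congrE; rewrite burau_nseq; exists (burau_nilp k). Qed.

Lemma in_congr_coprime a b u :
  coprime a b -> in_congr (a * b) u <-> in_congr a u /\ in_congr b u.
Proof.
move=> coprime_ab.
have chinese x y : (x = y %[mod (a * b)%N])%Z <-> (x = y %[mod a])%Z /\ (x = y %[mod b])%Z.
  rewrite PoszM; split=> [/eqP | [/eqP xa /eqP xb]].
    by rewrite zchinese_remainder // => /andP[/eqP ? /eqP ?].
  by apply/eqP; rewrite zchinese_remainder // xa xb.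
split=> [congr_u | [congr_a congr_b] i j]; last exact/chinese.
by split=> i j; have [] := (chinese _ _).1 (congr_u i j).
Qed.

End BurauMatrices.

Lemma intr_Zp_eq p (x y : int) :
  (1 < p)%N -> ((x%:~R : 'Z_p) == y%:~R) = (x == y %[mod p])%Z.
Proof.
move=> p_gt1; rewrite -subr_eq0 -rmorphB /= eqz_mod_dvd dvdzE.
case: (x - y) => [k|k]; rewrite ?NegzE ?rmorphN ?oppr_eq0 ?abszN ?absz_nat /=;
  by rewrite -val_eqE /= val_Zp_nat.
Qed.

Section BraidPermutation.
Variable m : nat.
Local Notation n := m.+1.
Implicit Types (k : 'I_n.-1) (u v w : seq (braid_letter n)) (M : 'M['Z_2]_m).

Definition braid_perm w : {perm 'I_n} := foldr (fun x s => adj_tperm x.1 * s)%g 1%g w.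

Lemma braid_perm_cat u v : braid_perm (u ++ v) = (braid_perm u * braid_perm v)%g.
Proof. by elim: u => [|x u IHu] /=; rewrite ?mul1g // IHu mulgA. Qed.

Lemma braid_perm_nseq_odd k p : odd p -> braid_perm (nseq p (k, true)) = adj_tperm k.
Proof.
move=> odd_p; rewrite -[p]odd_double_half odd_p add1n.
elim: p./2 => [|q IHq]; first by rewrite /= mulg1.
by move: IHq; rewrite doubleS /= mulgA tperm2 mul1g.
Qed.

Lemma braid_perm_level_onto l :
  odd l -> forall s : {perm 'I_n}, exists2 u, in_congr l u & braid_perm u = s.
Proof.
move=> odd_l; apply: adj_tperm_ind.
- by exists [::] => // i j; rewrite mxE; case: (i == j).
- move=> _ _ [u congr_u <-] [v congr_v <-].
  by exists (u ++ v); [apply: in_congr_cat | apply: braid_perm_cat].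
- move=> k; exists (nseq l (k, true)); first exact: in_congr_nseq.
  exact: braid_perm_nseq_odd.
Qed.

Definition mod2_mx (A : 'M[int]_m) : 'M['Z_2]_m := map_mx intr A.

Lemma in_congr2E w : in_congr 2 w <-> mod2_mx (burau w) = 1%:M.
Proof.
have mod2E (x : int) (b : bool) : ((x%:~R : 'Z_2) == b%:R) = (x == b %[mod 2])%Z.
  exact: (@intr_Zp_eq 2 x b isT).
split=> [congr_w | /matrixP mod2_w i j].
  by apply/matrixP => i j; rewrite !mxE; apply/eqP; rewrite mod2E (congr_w i j).
by apply/eqP; rewrite -mod2E; have := mod2_w i j; rewrite !mxE => ->.
Qed.

Lemma mod2_burau_letter (x : braid_letter n) :
  mod2_mx (burau_letter x) = mod2_mx (burau_gen x.1).
Proof.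
case: x => k [] //; rewrite /burau_letter /= (@burau_gen_inv n) burau_genE.
rewrite /mod2_mx map_mxB map_mxD; congr (_ + _).
by apply/matrixP => a b; rewrite !mxE oppr_pchar2.
Qed.

Lemma mod2_burau_cons x w :
  mod2_mx (burau (x :: w)) = mod2_mx (burau_gen x.1) *m mod2_mx (burau w).
Proof. by rewrite -mod2_burau_letter /mod2_mx -map_mxM. Qed.

(* y_(j+1) in 0-based indexing: e_(j-1) + e_j, out-of-range terms being 0. *)
Definition strand_vec (j : nat) : 'cV['Z_2]_m :=
  \col_a (((a == j :> nat) || (a.+1 == j))%:R).

Definition basis_vec (i : nat) : 'cV['Z_2]_m := \col_a ((a == i :> nat)%:R).

Lemma mod2_burau_gen_strand_vec k (j : 'I_n) :
  mod2_mx (burau_gen k) *m strand_vec (adj_tperm k j) = strand_vec j.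
Proof.
rewrite /mod2_mx burau_genE map_mxD map_mx1 mulmxDl mul1mx.
apply/matrixP => a z; rewrite !mxE (bigD1 k) //= big1 ?addr0 => [|c ck]; last first.
  by rewrite !mxE (negbTE (ck : (c : nat) != k)) !andbF mulr0z mul0r.
rewrite !mxE eqxx !andbT /adj_tperm.
case: tpermP => [->|->|/eqP + /eqP]; rewrite -?val_eqE /= /bump /= ?add1n => *;
  by do ![case: eqP => ? /=]; first [by apply/eqP | lia].
Qed.

Lemma mod2_burau_strand_vec w (j : 'I_n) :
  mod2_mx (burau w) *m strand_vec (braid_perm w j) = strand_vec j.
Proof.
elim: w j => [|x w IHw] j; first by rewrite /mod2_mx map_mx1 mul1mx perm1.
by rewrite mod2_burau_cons /= permM -mulmxA IHw mod2_burau_gen_strand_vec.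
Qed.

Lemma strand_vec0 : strand_vec 0 = basis_vec 0.
Proof. by apply/matrixP => a z; rewrite !mxE orbF. Qed.

Lemma strand_vecS i : strand_vec i.+1 = basis_vec i.+1 + basis_vec i.
Proof.
apply/matrixP => a z; rewrite !mxE eqSS.
by case: eqP => [->|_]; rewrite ?orbF ?(gtn_eqF (ltnSn i)) ?addr0 ?add0r.
Qed.

Lemma fix_strand_vecs_eq1 M :
  (forall j : 'I_n, M *m strand_vec j = strand_vec j) -> M = 1%:M.
Proof.
move=> fixM.
have fix_basis i : (i < m)%N -> M *m basis_vec i = basis_vec i.
  elim: i => [_|i IHi lt_im]; first by rewrite -strand_vec0 (fixM ord0).
  have := fixM (Ordinal (leqW lt_im)); rewrite strand_vecS mulmxDr IHi ?(ltnW lt_im) //.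
  exact: addIr.
apply/matrixP => a b; have /matrixP/(_ a 0) := fix_basis b (ltn_ord b).
rewrite !mxE => <-; rewrite (bigD1 b) //= big1 => [|c cb].
  by rewrite mxE eqxx mulr1 addr0.
by rewrite mxE (negbTE (cb : (c : nat) != b)) mulr0.
Qed.

(* Fails for n = 2, where both vectors are e_0. *)
Lemma strand_vec_inj : (2 <= m)%N -> injective (fun j : 'I_n => strand_vec j).
Proof.
move=> m_ge2 a b /matrixP eq_ab; apply: ord_inj.
have row_eq r : (r < m)%N -> ((r == a) || (r.+1 == a)) = ((r == b) || (r.+1 == b)).
  move=> lt_rm; have := eq_ab (Ordinal lt_rm) 0; rewrite !mxE /=.
  by do 2!case: (_ || _) => //; move/eqP.
have := row_eq a; have := row_eq b; have := row_eq m.-1; have := row_eq m.-2.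
have := ltn_ord a; have := ltn_ord b; lia.
Qed.

Lemma braid_perm_eq1 w : (2 <= m)%N -> braid_perm w = 1%g <-> mod2_mx (burau w) = 1%:M.
Proof.
move=> m_ge2; split=> [perm_w | mod2_w].
  by apply: fix_strand_vecs_eq1 => j; rewrite -{1}[j]perm1 -perm_w mod2_burau_strand_vec.
apply/permP => j; rewrite perm1; apply: (strand_vec_inj m_ge2).
by rewrite /= -[strand_vec (braid_perm w j)]mul1mx -mod2_w mod2_burau_strand_vec.
Qed.

End BraidPermutation.

Local Close Scope ring_scope.

Theorem theorem3p1 (n l : nat) :
  3 <= n -> odd l -> 0 < l ->
  exists phi : seq (braid_letter n) -> {perm 'I_n},
    [/\ (forall u v, in_congr l u -> in_congr l v ->
           phi (u ++ v) = (phi u * phi v)%g),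
        (forall u, in_congr l u -> (phi u = 1%g <-> in_congr (2 * l) u))
      & (forall s : {perm 'I_n}, exists2 u, in_congr l u & phi u = s)].
Proof.
case: n => // m m_ge2 odd_l _; exists (@braid_perm m); split.
- by move=> u v _ _; apply: braid_perm_cat.
- move=> u congr_u; rewrite braid_perm_eq1 // -in_congr2E in_congr_coprime ?coprime2n //.
  by split=> [|[]].
- exact: braid_perm_level_onto.
Qed.
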